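(* Let $h$ be the morphism on the alphabet $\{1,3,4\}$ given by $h(1)=14$, $h(3)=14$, $h(4)=3$. For all $n\ge5$ one has (i) $\Delta C_Z(\Psi_n)=h^{n-4}(3)$ and (ii) $\Delta C_Z(\Lambda_n)=h^{n-5}(3)$.
   Context: Fibonacci numbers: $F_0=0$, $F_1=1$, $F_n=F_{n-1}+F_{n-2}$. Every integer $N\ge0$ has a unique Zeckendorf expansion $N=\sum_{i\ge0}d_i(N)F_{i+2}$ with $d_i(N)\in\{0,1\}$ and no two consecutive digits equal to $1$; $s_Z(N)=\sum_i d_i(N)$. A point of constancy of $s_Z$ is an integer $N\ge0$ with $s_Z(N+1)=s_Z(N)$. For $n\ge3$ define the integer intervals $\Lambda_n=[F_n,F_{n+1}-1]$ and $\Psi_n=[0,F_n-1]$. For an integer interval $I$ (here $I=\Lambda_n$ or $I=\Psi_n$), let $c_1<c_2<\dots<c_k$ be the points of constancy of $s_Z$ lying in $I$ and let $c_{k+1}$ be the smallest point of constancy of $s_Z$ larger than $\max I$; then $\Delta C_Z(I)$ denotes the word $(c_2-c_1)(c_3-c_2)\cdots(c_{k+1}-c_k)$ over the alphabet of positive integers. *)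

From mathcomp Require Import all_boot.
Set Implicit Arguments. Unset Strict Implicit. Unset Printing Implicit Defensive.

Fixpoint fib (n : nat) : nat :=
  match n with
  | 0 => 0
  | 1 => 1
  | (m.+1 as k).+1 => fib k + fib m
  end.

Definition top_index (N : nat) : nat := \max_(i < N.+1 | fib i.+2 <= N) i.

(* Zeckendorf expansion computed by the greedy algorithm: the list of the
   indices i with d_i(N) = 1 (in decreasing order).  Fuel N suffices since
   N strictly decreases at every step. *)
Fixpoint zeck_idx_aux (fuel N : nat) : seq nat :=
  match fuel with
  | 0 => [::]
  | f.+1 => if N == 0 then [::]
            else top_index N :: zeck_idx_aux f (N - fib (top_index N).+2)
  end.

Definition zeck_idx (N : nat) : seq nat := zeck_idx_aux N N.

Definition zdigit (i N : nat) : nat := (i \in zeck_idx N).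
Definition sZ (N : nat) : nat := size (zeck_idx N).

Definition is_const_pt (N : nat) : bool := sZ N.+1 == sZ N.

Definition const_pts (a b : nat) : seq nat :=
  [seq c <- iota a (b.+1 - a) | is_const_pt c].

Definition next_const_pt (b c : nat) : Prop :=
  b < c /\ is_const_pt c /\ (forall m, b < m -> is_const_pt m -> c <= m).

Definition diffs (s : seq nat) : seq nat :=
  match s with
  | [::] => [::]
  | x :: t => pairmap (fun u v => v - u) x t
  end.

(* Delta C_Z([a,b]) given the next point of constancy c after b. *)
Definition DeltaCZ (a b c : nat) : seq nat := diffs (const_pts a b ++ [:: c]).

Definition h_letter (x : nat) : seq nat :=
  match x with
  | 1 => [:: 1; 4]
  | 3 => [:: 1; 4]
  | 4 => [:: 3]
  | _ => [::]
  end.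

Definition h (w : seq nat) : seq nat := flatten (map h_letter w).

Definition Psi_lo (n : nat) := 0.
Definition Psi_hi (n : nat) := (fib n).-1.
Definition Lambda_lo (n : nat) := fib n.
Definition Lambda_hi (n : nat) := (fib n.+1).-1.

From mathcomp Require Import all_boot.
From mathcomp Require Import zify.

(* Adding F_{i+2} to x < F_{i+1} puts one more digit in front of the
   Zeckendorf expansion of x, so s_Z(F_{i+2} + x) = s_Z(x) + 1.  Hence the
   points of constancy in Lambda_{n+1} are those of Psi_n translated by
   F_{n+1} (the last points F_n - 1 and F_{n+2} - 1 of the two intervals are
   not points of constancy), and the first of them, F_{n+1} + 1, is the next
   point of constancy after Psi_{n+1}.  Thus
   Delta C_Z(Lambda_{n+1}) = Delta C_Z(Psi_n) and
   Delta C_Z(Psi_{n+2}) = Delta C_Z(Psi_{n+1}) Delta C_Z(Lambda_{n+1}),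
   which is the recursion h^{k+2}(3) = h^{k+1}(3) h^k(3); the case n = 5 is
   checked directly. *)

Lemma fibSS k : fib k.+2 = fib k.+1 + fib k.
Proof. by []. Qed.

Lemma fib_monotone : {homo fib : i j / i <= j}.
Proof.
apply: homo_leq => //; first exact: leq_trans.
by case=> // k; rewrite fibSS leq_addr.
Qed.

Lemma fib_gt0 k : 0 < fib k.+1.
Proof. by elim: k => // k IH; rewrite fibSS; lia. Qed.

Lemma ltn_fib k : k < fib k.+2.
Proof. by elim: k => // k IH; rewrite fibSS; have := fib_gt0 k; lia. Qed.

Lemma zeck_idx_aux_fuel f1 f2 N :
  N <= f1 -> N <= f2 -> zeck_idx_aux f1 N = zeck_idx_aux f2 N.
Proof.
elim: f1 f2 N => [|f1 IH] [|f2] N.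
- by [].
- by rewrite leqn0 => /eqP -> _.
- by move=> _; rewrite leqn0 => /eqP ->.
rewrite [LHS]/= [RHS]/=; case: eqP => // /eqP N_neq0 N_le_f1 N_le_f2.
congr (_ :: _); have /= fib_pos := fib_gt0 (top_index N).+1; apply: IH; lia.
Qed.

Lemma top_index_fibD i x : x < fib i.+1 -> top_index (fib i.+2 + x) = i.
Proof.
move=> x_lt; apply/eqP; rewrite eqn_leq; apply/andP; split.
  apply/bigmax_leqP => k fib_le; rewrite leqNgt; apply/negP => i_lt_k.
  have : fib i.+3 <= fib k.+2 by apply: fib_monotone.
  rewrite fibSS; lia.
have i_lt : i < (fib i.+2 + x).+1 by have := ltn_fib i; lia.
by apply: (leq_bigmax_cond (Ordinal i_lt)); rewrite /= leq_addr.
Qed.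

Lemma sZ_greedy N : 0 < N -> sZ N = (sZ (N - fib (top_index N).+2)).+1.
Proof.
case: N => // N _; set M := N.+1 - _.
have M_le : M <= N by have := fib_gt0 (top_index N.+1).+1; rewrite /M; lia.
rewrite /sZ /zeck_idx -[zeck_idx_aux N.+1 N.+1]/(top_index N.+1 :: zeck_idx_aux N M).
by rewrite (zeck_idx_aux_fuel _ _ _ M_le (leqnn M)).
Qed.

Lemma sZ_fibD i x : x < fib i.+1 -> sZ (fib i.+2 + x) = (sZ x).+1.
Proof.
move=> x_lt; rewrite sZ_greedy ?top_index_fibD ?addKn //.
by have := fib_gt0 i.+1; lia.
Qed.

Lemma sZ_fib i : sZ (fib i.+2) = 1.
Proof. by rewrite -[fib i.+2]addn0 sZ_fibD ?fib_gt0. Qed.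

Lemma sZ_gt0 N : 0 < N -> 0 < sZ N.
Proof. by case: N. Qed.

Lemma is_const_pt_fibD i x :
  x.+1 < fib i.+1 -> is_const_pt (fib i.+2 + x) = is_const_pt x.
Proof.
by move=> x_lt; rewrite /is_const_pt -addnS !sZ_fibD // ltnW.
Qed.

Lemma is_const_pt_fib n : 4 <= n -> ~~ is_const_pt (fib n).
Proof.
case: n => [|[|[|[|n]]]] // _.
have fib_ge : 2 <= fib n.+3 := @fib_monotone 3 n.+3 isT.
by rewrite -[fib _]addn0 is_const_pt_fibD.
Qed.

Lemma is_const_pt_fibS n : 5 <= n -> is_const_pt (fib n).+1.
Proof.
case: n => [|[|[|[|[|n]]]]] // _.
have fib_ge : 3 <= fib n.+4 := @fib_monotone 4 n.+4 isT.
by rewrite -addn1 is_const_pt_fibD // /is_const_pt (sZ_fib 0) (sZ_fib 1).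
Qed.

Lemma is_const_pt_fib_pred n : 5 <= n -> ~~ is_const_pt (fib n).-1.
Proof.
case: n => [|[|[|[|[|n]]]]] // _.
have fib_ge : 2 <= fib n.+3 := @fib_monotone 3 n.+3 isT.
have split_pred : (fib n.+4.+1).-1 = fib n.+4 + (fib n.+3).-1 by rewrite fibSS; lia.
rewrite /is_const_pt prednK ?fib_gt0 // sZ_fib split_pred sZ_fibD; last lia.
by have := @sZ_gt0 (fib n.+3).-1; lia.
Qed.

Lemma next_const_pt_fib_pred n : 5 <= n -> next_const_pt (fib n).-1 (fib n).+1.
Proof.
move=> n_ge5; have fib_pos : 0 < fib n by case: n n_ge5 => // n _; apply: fib_gt0.
split; first lia.
split=> [|m m_gt const_m]; first exact: is_const_pt_fibS.
have : m != fib n by apply: contraTneq const_m => ->; apply: is_const_pt_fib; lia.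
lia.
Qed.

Lemma const_pts_Psi_split n :
  const_pts (Psi_lo n.+2) (Psi_hi n.+2) =
  const_pts (Psi_lo n.+1) (Psi_hi n.+1) ++ const_pts (Lambda_lo n.+1) (Lambda_hi n.+1).
Proof.
rewrite /const_pts /Psi_lo /Psi_hi /Lambda_lo /Lambda_hi !prednK ?fib_gt0 //.
by rewrite !subn0 fibSS addKn iotaD filter_cat.
Qed.

Lemma const_pts_Lambda_head n : 4 <= n ->
  exists s, const_pts (Lambda_lo n.+1) (Lambda_hi n.+1) = (fib n.+1).+1 :: s.
Proof.
move=> n_ge4; have fib_ge : 3 <= fib n := @fib_monotone 4 n n_ge4.
rewrite /const_pts /Lambda_lo /Lambda_hi prednK ?fib_gt0 // fibSS addKn.
have -> : fib n = (fib n - 2).+2 by lia.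
have not_const_fib : ~~ is_const_pt (fib n.+1) by apply: is_const_pt_fib; lia.
have const_fibS : is_const_pt (fib n.+1).+1 by apply: is_const_pt_fibS.
by rewrite /= (negbTE not_const_fib) const_fibS; eexists.
Qed.

Lemma const_pts_Lambda_shift n : 5 <= n ->
  const_pts (Lambda_lo n.+1) (Lambda_hi n.+1) =
  map (addn (fib n.+1)) (const_pts (Psi_lo n) (Psi_hi n)).
Proof.
case: n => // n n_ge5; rewrite /const_pts /Lambda_lo /Lambda_hi /Psi_lo /Psi_hi.
rewrite !prednK ?fib_gt0 // (fibSS n.+1) addKn subn0.
rewrite -{1}(addn0 (fib n.+2)) iotaDl filter_map; congr map.
apply: eq_in_filter => x; rewrite mem_iota add0n => /andP[_ x_lt].
rewrite -[preim _ _ x]/(is_const_pt (fib n.+2 + x)).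
have [x_lt_pred | x_ge] := ltnP x.+1 (fib n.+1); first exact: is_const_pt_fibD.
have -> : x = (fib n.+1).-1 by lia.
have -> : fib n.+2 + (fib n.+1).-1 = (fib n.+3).-1 by rewrite (fibSS n.+1); lia.
have n3_ge5 : 5 <= n.+3 by lia.
by rewrite !(negbTE (is_const_pt_fib_pred _ _)).
Qed.

Lemma diffs_map_addn a s : diffs (map (addn a) s) = diffs s.
Proof.
case: s => //= x t; elim: t x => //= y t IH x.
by rewrite IH subnDl.
Qed.

Lemma diffs_cat s y t : diffs (s ++ y :: t) = diffs (s ++ [:: y]) ++ diffs (y :: t).
Proof. by case: s => [|x s] //; rewrite /diffs /= !pairmap_cat -catA. Qed.

Definition psi_word n := DeltaCZ (Psi_lo n) (Psi_hi n) (fib n).+1.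
Definition lambda_word n := DeltaCZ (Lambda_lo n) (Lambda_hi n) (fib n.+1).+1.

Lemma lambda_wordS n : 5 <= n -> lambda_word n.+1 = psi_word n.
Proof.
move=> n_ge5; rewrite /lambda_word /psi_word /DeltaCZ const_pts_Lambda_shift //.
have -> : (fib n.+2).+1 = fib n.+1 + (fib n).+1 by rewrite fibSS addnS.
by rewrite -[[:: _ + _]]/(map (addn (fib n.+1)) [:: (fib n).+1]) -map_cat diffs_map_addn.
Qed.

Lemma psi_wordSS n : 4 <= n -> psi_word n.+2 = psi_word n.+1 ++ lambda_word n.+1.
Proof.
move=> n_ge4; have [s Lambda_pts] := const_pts_Lambda_head _ n_ge4.
by rewrite /psi_word /lambda_word /DeltaCZ const_pts_Psi_split -catA Lambda_pts [LHS]diffs_cat.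
Qed.

Lemma h_cat s t : h (s ++ t) = h s ++ h t.
Proof. by rewrite /h map_cat flatten_cat. Qed.

Lemma iter_h_cat k s t : iter k h (s ++ t) = iter k h s ++ iter k h t.
Proof. by elim: k => //= k ->; rewrite h_cat. Qed.

Lemma iter_h3SS k : iter k.+2 h [:: 3] = iter k.+1 h [:: 3] ++ iter k h [:: 3].
Proof. by rewrite iterSr -[h [:: 3]]/([:: 1] ++ [:: 4]) iter_h_cat !iterSr. Qed.

Lemma psi_word5 : psi_word 5 = [:: 1; 4].
Proof.
have const1 : is_const_pt 1 by rewrite /is_const_pt (sZ_fib 0) (sZ_fib 1).
have const2 : is_const_pt 2 by rewrite /is_const_pt (sZ_fib 1) (sZ_fib 2).
have const3 : ~~ is_const_pt 3 by apply: (is_const_pt_fib 4).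
have const4 : ~~ is_const_pt 4 by apply: (is_const_pt_fib_pred 5).
(* [simpl] evaluates [is_const_pt 0] to [false] since [sZ 0] and [sZ 1] compute. *)
rewrite /psi_word /DeltaCZ /const_pts -[iota _ _]/[:: 0; 1; 2; 3; 4] /=.
by rewrite const1 const2 (negbTE const3) (negbTE const4).
Qed.

Lemma lambda_word5 : lambda_word 5 = [:: 3].
Proof.
have const5 : ~~ is_const_pt 5 by apply: (is_const_pt_fib 5).
have const6 : is_const_pt 6 by apply: (is_const_pt_fibS 5).
have const7 : ~~ is_const_pt 7 by apply: (is_const_pt_fib_pred 6).
rewrite /lambda_word /DeltaCZ /const_pts -[iota _ _]/[:: 5; 6; 7] /=.
by rewrite (negbTE const5) const6 (negbTE const7).
Qed.

Lemma psi_lambda_words_iter k :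
  psi_word (5 + k) = iter k.+1 h [:: 3] /\ lambda_word (5 + k) = iter k h [:: 3].
Proof.
elim: k => [|k [psiE lambdaE]]; first by rewrite psi_word5 lambda_word5.
rewrite addnS lambda_wordS ?leq_addr // psiE; split=> //.
by rewrite psi_wordSS ?psiE ?lambdaE ?iter_h3SS // addSnnS leq_addr.
Qed.

Theorem proposition1 (n : nat) (hn : 5 <= n) :
  (exists c, next_const_pt (Psi_hi n) c /\
     DeltaCZ (Psi_lo n) (Psi_hi n) c = iter (n - 4) h [:: 3]) /\
  (exists c, next_const_pt (Lambda_hi n) c /\
     DeltaCZ (Lambda_lo n) (Lambda_hi n) c = iter (n - 5) h [:: 3]).
Proof.
have [psiE lambdaE] := psi_lambda_words_iter (n - 5).
rewrite subnKC // in psiE lambdaE.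
split.
- exists (fib n).+1; split; first exact: next_const_pt_fib_pred.
  have -> : n - 4 = (n - 5).+1 by lia.
  exact: psiE.
- exists (fib n.+1).+1; split; first by apply: next_const_pt_fib_pred; lia.
  exact: lambdaE.
Qed.
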